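(* For every integer $n\ge4$, $\gamma_{(1,1,0)}^s(P_n)=2\lceil n/3\rceil$.
   Context: $P_n$ is the path on $n$ vertices; $N(v)$ is the open neighbourhood. For a graph $G$, a function $f:V(G)\to\{0,1,2\}$ is a $(1,1,0)$-dominating function if $\sum_{u\in N(v)}f(u)\ge1$ for every vertex $v$ with $f(v)\in\{0,1\}$. For adjacent $v,u$ with $f(v)=0$, $f(u)>0$, $f_{u\to v}$ is defined by $f_{u\to v}(v)=1$, $f_{u\to v}(u)=f(u)-1$, $f_{u\to v}(x)=f(x)$ otherwise. $f$ is a secure $(1,1,0)$-dominating function if it is $(1,1,0)$-dominating and for every $v$ with $f(v)=0$ there is $u\in N(v)$ with $f(u)>0$ such that $f_{u\to v}$ is $(1,1,0)$-dominating. $\gamma_{(1,1,0)}^s(G)$ is the minimum of $\sum_v f(v)$ over secure $(1,1,0)$-dominating functions. *)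

From mathcomp Require Import all_boot.
Set Implicit Arguments. Unset Strict Implicit. Unset Printing Implicit Defensive.

(* A graph is a relation [adj : rel T] on a finite type T (assumed symmetric,
   irreflexive for simple graphs).  N(v) = [set u | adj v u]. *)

(* Functions f : V -> {0,1,2} are represented as V -> nat; the condition
   that values lie in {0,1,2} is part of the definitions below. *)

Section Dom.
Variables (T : finType) (adj : rel T).

Definition nbsum (f : T -> nat) (v : T) : nat := \sum_(u | adj v u) f u.

Definition is_012 (f : T -> nat) : bool := [forall v, f v <= 2].

Definition dom110 (f : T -> nat) : bool :=
  is_012 f && [forall v, (f v <= 1) ==> (1 <= nbsum f v)].

Definition fmove (f : T -> nat) (u v : T) : T -> nat :=
  fun x => if x == v then 1 else if x == u then (f u).-1 else f x.

Definition secure_dom110 (f : T -> nat) : bool :=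
  dom110 f &&
  [forall v, (f v == 0) ==>
     [exists u, [&& adj v u, 0 < f u & dom110 (fmove f u v)]]].

Definition weight (f : T -> nat) : nat := \sum_v f v.

Definition is_gamma_s110 (k : nat) : Prop :=
  (exists f : T -> nat, secure_dom110 f /\ weight f = k) /\
  (forall f : T -> nat, secure_dom110 f -> k <= weight f).
End Dom.

Definition path_adj (n : nat) : rel 'I_n :=
  fun i j => (i.+1 == j :> nat) || (j.+1 == i :> nat).

From mathcomp Require Import all_boot zify.
Set Implicit Arguments. Unset Strict Implicit. Unset Printing Implicit Defensive.

(* In a secure (1,1,0)-dominating function every closed neighbourhood has
   weight at least 2: a vertex of weight 1 needs a neighbour of positive
   weight, and a vertex of weight 0, after taking one unit from a neighbour,
   has weight 1 and must still see weight 1 around it.  Covering P_n by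
   disjoint closed neighbourhoods (triples, together with the end pair
   {v1,v2} when n = 1, 2 mod 3 and also {v(n-1),vn} when n = 1 mod 3) gives
   weight >= 2 ceil(n/3).  Conversely, weight 2 on the vertices v(3k+2) (and
   on vn when n = 1 mod 3) is {0,2}-valued with every 0 next to a 2, and such
   functions are always secure: moving one unit from a 2 leaves 1 on both
   ends of the edge. *)

Section SecureDomination.
Variables (T : finType) (adj : rel T).
Hypothesis adj_irr : irreflexive adj.

Lemma leq_nbsum (f : T -> nat) (v u : T) : adj v u -> f u <= nbsum adj f v.
Proof. by move=> vu; rewrite /nbsum (bigD1 u) //= leq_addr. Qed.

Lemma nbsum_fmove (f : T -> nat) (u v : T) : adj v u ->
  nbsum adj (fmove f u v) v + f u = nbsum adj f v + (f u).-1.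
Proof.
move=> vu; have uv : (u == v) = false.
  by apply/negbTE/eqP => eq_uv; move: vu; rewrite eq_uv adj_irr.
rewrite /nbsum (bigD1 u) //= [X in _ = X + _](bigD1 u) //= /fmove uv eqxx.
rewrite (eq_bigr f); first lia.
move=> w /andP [vw /negbTE ->]; case: eqP => // eq_wv.
by move: vw; rewrite eq_wv adj_irr.
Qed.

Lemma secure_dom110_closed_nbsum (f : T -> nat) (v : T) :
  secure_dom110 adj f -> 2 <= f v + nbsum adj f v.
Proof.
case/andP=> /andP [_ /forallP dom] /forallP secure.
case fv: (f v) => [|[|]]; last by lia.
- have /existsP [u /and3P [vu fu_gt0 /andP [_ /forallP /(_ v)]]] :
    [exists u, [&& adj v u, 0 < f u & dom110 adj (fmove f u v)]].
    by have := secure v; rewrite fv.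
  rewrite {1}/fmove eqxx /= => moved.
  have := nbsum_fmove f vu; lia.
- by have := dom v; rewrite fv /=; lia.
Qed.

Hypothesis adj_sym : symmetric adj.

Lemma secure_dom110_of_02 (f : T -> nat) :
  (forall v, f v = 0 \/ f v = 2) ->
  (forall v, f v = 0 -> exists2 u, adj v u & f u = 2) ->
  secure_dom110 adj f.
Proof.
move=> f02 nb2.
have f012 (g : T -> nat) : (forall x, g x <= 2) -> is_012 g by move=> g2; apply/forallP.
have nbsum_gt0 (g : T -> nat) v u : adj v u -> 0 < g u -> 0 < nbsum adj g v.
  by move=> vu gu; apply: leq_trans gu (leq_nbsum g vu).
apply/andP; split.
  rewrite /dom110 f012 => [|x]; last by case: (f02 x) => ->.
  apply/forallP => v; apply/implyP; case: (f02 v) => fv; last by rewrite fv.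
  by have [u vu fu] := nb2 v fv; rewrite (nbsum_gt0 _ _ u) // fu.
apply/forallP => v; apply/implyP => /eqP fv.
have [u vu fu] := nb2 v fv.
have uv : (u == v) = false.
  by apply/negbTE/eqP => eq_uv; move: vu; rewrite eq_uv adj_irr.
apply/existsP; exists u; rewrite vu fu /=.
rewrite /dom110 f012 => [|x]; last first.
  by rewrite /fmove; case: eqP => // _; case: eqP => _; [rewrite fu | case: (f02 x) => ->].
apply/forallP => w; apply/implyP; case: (w =P v) => [-> _|wv].
  by rewrite (nbsum_gt0 _ _ u) // /fmove uv eqxx fu.
case: (w =P u) => [-> _|wu].
  by rewrite (nbsum_gt0 _ _ v) 1?adj_sym // /fmove eqxx.
rewrite {1}/fmove (introF eqP wv) (introF eqP wu).
case: (f02 w) => fw; last by rewrite fw.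
have [x wx fx] := nb2 w fw; rewrite (nbsum_gt0 _ _ x) //.
rewrite /fmove; case: eqP => // _; case: eqP => [_|_]; first by rewrite fu.
by rewrite fx.
Qed.

End SecureDomination.

Lemma big_nat_pair (g : nat -> nat) a : \sum_(a <= i < a.+2) g i = g a + g a.+1.
Proof. by rewrite big_nat_recr // big_nat1. Qed.

Lemma sum_triples_ge (g : nat -> nat) c a k :
  (forall m, m < k -> c <= g (a + 3 * m) + g (a + 3 * m).+1 + g (a + 3 * m).+2) ->
  c * k <= \sum_(a <= i < a + 3 * k) g i.
Proof.
elim: k => [|k IH] triple; first by rewrite muln0.
have -> : a + 3 * k.+1 = (a + 3 * k).+3 by lia.
rewrite !big_nat_recr /= ?leqW ?leq_addr //.
have := IH (fun m lt_mk => triple m (ltnW lt_mk)); have := triple k (ltnSn k).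
lia.
Qed.

Lemma sum_ge_of_windows (g : nat -> nat) n : 4 <= n -> g n = 0 ->
  2 <= g 0 + g 1 -> (forall i, i.+2 <= n -> 2 <= g i + g i.+1 + g i.+2) ->
  2 * ((n + 2) %/ 3) <= \sum_(0 <= i < n) g i.
Proof.
move=> n_ge4 gn first window.
have blocks a k : a + 3 * k <= n -> 2 * k <= \sum_(a <= i < a + 3 * k) g i.
  by move=> le_n; apply: sum_triples_ge => m lt_mk; apply: window; lia.
have n_eq := divn_eq n 3; have := ltn_pmod n (isT : 0 < 3).
case r: (n %% 3) => [|[|[|]]] // _.
- by have := blocks 0 (n %/ 3); rewrite add0n (_ : 3 * (n %/ 3) = n); lia.
- rewrite (big_cat_nat (n := 2)) ?big_nat_pair //=; last lia.
  rewrite (big_cat_nat (n := n - 2)) //=; [|lia|lia].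
  have -> : \sum_(n - 2 <= i < n) g i = g (n - 2) + g (n - 2).+1.
    by rewrite -big_nat_pair (_ : (n - 2).+2 = n) //; lia.
  have := window (n - 2); rewrite (_ : (n - 2).+2 = n) ?gn; last lia.
  have := blocks 2 (n %/ 3 - 1); rewrite (_ : 2 + 3 * (n %/ 3 - 1) = n - 2); lia.
- rewrite (big_cat_nat (n := 2)) ?big_nat_pair //=; last lia.
  by have := blocks 2 (n %/ 3); rewrite (_ : 2 + 3 * (n %/ 3) = n); lia.
Qed.

Section PathGraph.
Variable n : nat.

Lemma path_adj_irr : irreflexive (@path_adj n).
Proof. by move=> x; rewrite /path_adj; apply/negbTE/norP; split; apply/eqP; lia. Qed.

Lemma path_adj_sym : symmetric (@path_adj n).
Proof. by move=> x y; rewrite /path_adj orbC. Qed.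

Definition ext0 (f : 'I_n -> nat) (i : nat) : nat :=
  if insub i is Some u then f u else 0.

Lemma ext0E (f : 'I_n -> nat) (u : 'I_n) : ext0 f u = f u.
Proof. by rewrite /ext0 valK. Qed.

Lemma ext0_out (f : 'I_n -> nat) i : n <= i -> ext0 f i = 0.
Proof. by rewrite /ext0 leqNgt; case: insubP => // u _ <-; rewrite ltn_ord. Qed.

Lemma sum_val_eq (f : 'I_n -> nat) k : \sum_(u : 'I_n | u == k :> nat) f u = ext0 f k.
Proof.
rewrite /ext0; case: insubP => [u _ <-|k_ge_n].
  by rewrite (big_pred1 u) // => x /=; rewrite val_eqE.
by rewrite big_pred0 // => x; apply/eqP => xk; rewrite -xk ltn_ord in k_ge_n.
Qed.

Lemma weight_ext0 (f : 'I_n -> nat) : weight f = \sum_(0 <= i < n) ext0 f i.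
Proof. by rewrite big_mkord; apply: eq_bigr => i _; rewrite ext0E. Qed.

Lemma nbsum_path (f : 'I_n -> nat) (v : 'I_n) :
  nbsum (@path_adj n) f v = ext0 f v.+1 + (if 0 < v then ext0 f v.-1 else 0).
Proof.
rewrite /nbsum /path_adj (bigID (fun u : 'I_n => v.+1 == u :> nat)) /=.
rewrite -sum_val_eq (eq_bigl (fun u : 'I_n => u == v.+1 :> nat)); last first.
  by move=> u; rewrite [v.+1 == _]eq_sym andb_idl // => ->.
congr addn.
case: (posnP v) => [v0|v_gt0].
  by rewrite big1 // => u /andP [/orP [-> //|/eqP]]; rewrite v0.
rewrite -sum_val_eq; apply: eq_bigl => u; apply/idP/eqP.
  by case/andP=> /orP [->//|/eqP]; lia.
by move=> uv; apply/andP; split; [apply/orP; right|]; apply/eqP; lia.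
Qed.

End PathGraph.

Lemma secure_dom110_path_weight_ge n (f : 'I_n -> nat) :
  4 <= n -> secure_dom110 (@path_adj n) f -> 2 * ((n + 2) %/ 3) <= weight f.
Proof.
move=> n_ge4 secure; rewrite weight_ext0; apply: sum_ge_of_windows => //.
- exact: ext0_out.
- have n_gt0 : 0 < n by lia.
  have := secure_dom110_closed_nbsum (@path_adj_irr n) (Ordinal n_gt0) secure.
  by rewrite nbsum_path -ext0E /= addn0.
- move=> i lt_i2n; have lt_i1n : i.+1 < n by [].
  have := secure_dom110_closed_nbsum (@path_adj_irr n) (Ordinal lt_i1n) secure.
  by rewrite nbsum_path -ext0E /=; lia.
Qed.

Definition path_witness (n i : nat) : nat :=
  if (i %% 3 == 1) || ((i.+1 == n) && (n %% 3 == 1)) then 2 else 0.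

Lemma sum_two_at_1_mod3 m :
  \sum_(0 <= i < m) (if i %% 3 == 1 then 2 else 0) = 2 * ((m + 1) %/ 3).
Proof.
elim: m => [|m IH]; first by rewrite big_geq.
by rewrite big_nat_recr //= IH; case: ifP => /eqP; lia.
Qed.

Lemma weight_path_witness n :
  weight (fun i : 'I_n => path_witness n i) = 2 * ((n + 2) %/ 3).
Proof.
rewrite /weight -(big_mkord xpredT (path_witness n)).
case: n => [|m]; first by rewrite big_geq.
rewrite big_nat_recr //= (eq_big_nat _ _ (F2 := fun i => if i %% 3 == 1 then 2 else 0)).
  by rewrite sum_two_at_1_mod3 /path_witness eqxx /=; case: ifP; lia.
move=> i /andP [_ lt_im]; rewrite /path_witness (_ : i.+1 == m.+1 = false) ?andFb ?orbF //.
by apply/negbTE/eqP; lia.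
Qed.

Lemma path_witness_secure n : secure_dom110 (@path_adj n) (fun i : 'I_n => path_witness n i).
Proof.
apply: secure_dom110_of_02; [exact: path_adj_irr | exact: path_adj_sym | |].
  by move=> v; rewrite /path_witness; case: ifP; [right | left].
move=> v; rewrite /path_witness; case: ifP => // /norP [v_mod3 last_v] _.
have := ltn_pmod v (isT : 0 < 3).
case v3: (v %% 3) => [|[|[|]]] // _.
- have lt_v1n : v.+1 < n by move: last_v (ltn_ord v); rewrite negb_and; lia.
  exists (Ordinal lt_v1n); first by rewrite /path_adj /= eqxx.
  by rewrite /= ifT //; apply/orP; left; apply/eqP; lia.
- by rewrite v3 in v_mod3.
- have lt_v1n : v.-1 < n by have := ltn_ord v; lia.
  exists (Ordinal lt_v1n); first by rewrite /path_adj /=; apply/orP; right; apply/eqP; lia.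
  by rewrite /= ifT //; apply/orP; left; apply/eqP; lia.
Qed.

Theorem proposition23 (n : nat) :
  4 <= n -> is_gamma_s110 (@path_adj n) (2 * ((n + 2) %/ 3)).
Proof.
move=> n_ge4; split.
  by exists (fun i : 'I_n => path_witness n i); split;
    [exact: path_witness_secure | exact: weight_path_witness].
by move=> f; apply: secure_dom110_path_weight_ge.
Qed.
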